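(* Let $D$ be an $m\times m$ differential matrix over a field $\mathbb F$ that is block-superdiagonal with respect to a partition of $\{1,\dots,m\}$ into consecutive intervals $I_1,\dots,I_k$ (in increasing order). Then there exist a nondegenerate filtered complex over $\mathbb F$ and an adapted basis of it, in which the basis elements indexed by $I_j$ have degree $j$ for each $j$, such that the matrix of the colimit boundary with respect to this adapted basis is $D$.
   Context: A differential matrix is a square matrix $D$ with $D^2=0$. It is block-superdiagonal with respect to the partition $I_1,\dots,I_k$ if $D_{ab}=0$ whenever $a\in I_i$, $b\in I_j$ with $j\ne i+1$. A complex is a family $(V_n,\partial_n)_{n\in\mathbb Z}$ of finite-dimensional $\mathbb F$-vector spaces with $\partial_n:V_n\to V_{n-1}$, $\partial_{n-1}\partial_n=0$, all but finitely many $\partial_n$ isomorphisms. A filtered complex is a family of complexes $({}_pV_\bullet)_{p\in\mathbb Z}$ with each ${}_pV_\bullet$ a subcomplex of ${}_{p+1}V_\bullet$, ${}_pV_\bullet=0$ for $p$ sufficiently small, and ${}_pV_\bullet={}_{p+1}V_\bullet$ for all but finitely many $p$; its colimit $V_\bullet$ is ${}_pV_\bullet$ for large $p$; $V=\bigoplus_nV_n$ and the colimit boundary is $\partial=\bigoplus_n\partial_n:V\to V$. A vector has pure degree $n$ if it lies in $V_n$; the level of a nonzero $v\in V_n$ is the least $p$ with $v\in{}_pV_n$. An adapted basis is a basis of $V$ such that (i) every element has pure degree; (ii) for all $n,p$, ${}_pV_n$ is spanned by the basis elements of degree $n$ and level $\le p$; (iii) the basis is ordered so that degree is nondecreasing and,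 within each degree, level is nondecreasing. The filtered complex is nondegenerate if $\dim{}_{p+1}V_n\le\dim{}_pV_n+1$ for all $p,n$. The matrix of $\partial$ has as column $j$ the coordinates of $\partial$ applied to the $j$-th basis element. *)

From HB Require Import structures.
From mathcomp Require Import all_boot all_order all_algebra.
Set Implicit Arguments. Unset Strict Implicit. Unset Printing Implicit Defensive.
Import Order.TTheory GRing.Theory Num.Theory.
Local Open Scope ring_scope.

(* The colimit complex V_bullet is modelled inside a finite-dimensional
   F-vector space vT, which plays the role of V = (+)_n V_n. *)

Definition iso_on (F : fieldType) (vT : vectType F) (d : 'End(vT))
  (A B : {vspace vT}) : Prop :=
  (d @: A)%VS = B /\ (lker d :&: A)%VS = 0%VS.

Definition is_subcomplex (F : fieldType) (vT : vectType F) (d : 'End(vT))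
  (W : int -> {vspace vT}) : Prop :=
  (forall n : int, (d @: W n <= W (n - 1)%R)%VS) /\
  exists N : nat, forall n : int, (N <= absz n)%N -> iso_on d (W n) (W (n - 1)).

Definition is_colim_complex (F : fieldType) (vT : vectType F)
  (V : int -> {vspace vT}) (d : 'End(vT)) : Prop :=
  is_subcomplex d V /\ (d \o d = 0)%VF /\
  exists s : seq int, uniq s /\ (forall n : int, n \notin s -> V n = 0%VS) /\
     directv (\sum_(n <- s) V n) /\ (\sum_(n <- s) V n)%VS = fullv.

(* FV p = pV_bullet : a filtered complex with colimit (V, d). *)
Definition filtered_complex (F : fieldType) (vT : vectType F)
  (V : int -> {vspace vT}) (FV : int -> int -> {vspace vT}) (d : 'End(vT)) : Prop :=
  is_colim_complex V d /\
  [/\ (forall p n, (FV p n <= V n)%VS),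
      (forall p, is_subcomplex d (FV p)),
      (forall p n, (FV p n <= FV (p + 1)%R n)%VS),
      (exists P0 : int, forall p n, p <= P0 -> FV p n = 0%VS) &
      (exists P1 : int, forall p n, P1 <= p -> FV p n = V n)].

Definition nondegenerate_filtered (F : fieldType) (vT : vectType F)
  (FV : int -> int -> {vspace vT}) : Prop :=
  forall p n, (\dim (FV (p + 1) n) <= (\dim (FV p n)).+1)%N.

Definition is_level (F : fieldType) (vT : vectType F)
  (FV : int -> int -> {vspace vT}) (n : int) (v : vT) (p : int) : Prop :=
  v \in FV p n /\ forall q, v \in FV q n -> p <= q.

Definition adapted_basis (F : fieldType) (vT : vectType F) (m : nat)
  (V : int -> {vspace vT}) (FV : int -> int -> {vspace vT})
  (b : 'I_m -> vT) (deg lvl : 'I_m -> int) : Prop :=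
  basis_of fullv (map b (enum 'I_m)) /\
  [/\ (forall i, b i \in V (deg i)),
      (forall i, is_level FV (deg i) (b i) (lvl i)),
      (forall p n, FV p n =
         span (map b (filter (fun i => (deg i == n) && (lvl i <= p)) (enum 'I_m)))),
      (forall i j : 'I_m, (i <= j)%N -> deg i <= deg j) &
      (forall i j : 'I_m, (i <= j)%N -> deg i = deg j -> lvl i <= lvl j)].

(* Partition of {0,..,m-1} into consecutive nonempty intervals
   I_j = [c (j-1), c j), j = 1..k, in increasing order. *)
Definition interval_partition (m k : nat) (c : nat -> nat) : Prop :=
  [/\ c 0%N = 0%N, c k = m & forall j, (j < k)%N -> (c j < c j.+1)%N].

Definition in_block (c : nat -> nat) (j a : nat) : bool := (c j.-1 <= a < c j)%N.

Definition differential_mx (F : fieldType) (m : nat) (D : 'M[F]_m) : Prop :=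
  D *m D = 0.

Definition block_superdiag (F : fieldType) (m k : nat) (c : nat -> nat)
  (D : 'M[F]_m) : Prop :=
  forall (a b : 'I_m) (i j : nat), (1 <= i <= k)%N -> (1 <= j <= k)%N ->
    in_block c i a -> in_block c j b -> j != i.+1 -> D a b = 0.

From HB Require Import structures.
From mathcomp Require Import all_boot all_order all_algebra.
From mathcomp Require Import zify.
Import Order.TTheory GRing.Theory Num.Theory.
Local Open Scope ring_scope.

(* Realise the complex on F^m with its standard basis e_1, ..., e_m and the
   boundary e_b |-> \sum_a D_ab e_a; e_a gets as degree the index of the block
   containing a, and as level a itself.  Since D_ab <> 0 forces b to lie in
   the block following that of a, the boundary lowers degrees by one and
   strictly lowers levels, so the spans of the e_a of given degree and
   bounded level form a filtered complex; it is nondegenerate because each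
   level carries exactly one basis vector. *)

Set Implicit Arguments.
Unset Strict Implicit.
Unset Printing Implicit Defensive.

Section IntervalPartition.

Variables (m k : nat) (c : nat -> nat).
Hypothesis partition_c : interval_partition m k c.

Lemma interval_partition_mono i j : (i <= j <= k)%N -> (c i <= c j)%N.
Proof.
case: partition_c => _ _ c_lt /andP[].
elim: j => [|j IHj]; first by rewrite leqn0 => /eqP ->.
rewrite leq_eqVlt => /orP[/eqP -> // | ij] jk.
exact: leq_trans (IHj ij (ltnW jk)) (ltnW (c_lt _ jk)).
Qed.

Lemma in_block_le i j a a' : (i <= k)%N -> (a <= a')%N ->
  in_block c i a -> in_block c j a' -> (i <= j)%N.
Proof.
move=> ik aa' /andP[ci _] /andP[_ cj]; rewrite leqNgt; apply/negP => ji.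
have cji : (c j <= c i.-1)%N by apply: interval_partition_mono; lia.
by move: (leq_trans cj cji) (leq_trans ci aa'); rewrite leqNgt => /negP.
Qed.

Definition block_index (a : nat) : nat := find (fun j => (a < c j)%N) (iota 0 k.+1).

Lemma block_indexP a : (a < m)%N ->
  (0 < block_index a <= k)%N /\ in_block c (block_index a) a.
Proof.
move=> am; case: partition_c => c0 ck _.
have has_a : has (fun j => (a < c j)%N) (iota 0 k.+1).
  by apply/hasP; exists k; rewrite ?mem_iota ?ck //=; lia.
have ltk : (block_index a < k.+1)%N by rewrite -[k.+1](size_iota 0) -has_find.
have a_lt : (a < c (block_index a))%N.
  by have := nth_find 0 has_a; rewrite nth_iota.
have pos : (0 < block_index a)%N.
  by rewrite lt0n; apply: contraTneq a_lt => ->; rewrite c0.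
split; first by rewrite pos -ltnS.
rewrite /in_block a_lt andbT leqNgt.
have /(before_find 0) : ((block_index a).-1 < block_index a)%N by rewrite ltn_predL.
by rewrite nth_iota => [-> | ]; lia.
Qed.

Lemma block_indexE j a : (0 < j <= k)%N -> in_block c j a -> block_index a = j.
Proof.
move=> /andP[j_gt0 jk] ja; have [_ ck _] := partition_c.
have am : (a < m)%N.
  case/andP: ja => _ /leq_trans; apply.
  by rewrite -ck interval_partition_mono // jk leqnn.
have [/andP[_ bk] ba] := block_indexP am.
by apply/eqP; rewrite eqn_leq (in_block_le bk _ ba ja) // (in_block_le jk _ ja ba).
Qed.

Lemma block_index_mono a a' : (a <= a')%N -> (a' < m)%N ->
  (block_index a <= block_index a')%N.
Proof.
move=> aa' a'm; have am := leq_ltn_trans aa' a'm.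
have [/andP[_ bk] ba] := block_indexP am.
exact: in_block_le bk aa' ba (proj2 (block_indexP a'm)).
Qed.

Variables (F : fieldType) (D : 'M[F]_m).
Hypothesis superdiag_D : block_superdiag k c D.

Lemma block_superdiag_succ (a b : 'I_m) :
  D a b != 0 -> block_index b = (block_index a).+1.
Proof.
move=> Dab; apply/eqP; apply: contraNT Dab => ne; apply/eqP.
have [/andP[a_gt0 ak] ba] := block_indexP (ltn_ord a).
have [/andP[b_gt0 bk] bb] := block_indexP (ltn_ord b).
by apply: (superdiag_D _ _ ba bb ne); rewrite ?a_gt0 ?b_gt0.
Qed.

Lemma block_superdiag_lt (a b : 'I_m) : D a b != 0 -> (a < b)%N.
Proof.
move=> Dab; have [_ /andP[_ ac]] := block_indexP (ltn_ord a).
have [_ /andP[cb _]] := block_indexP (ltn_ord b).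
by move: cb; rewrite (block_superdiag_succ Dab) => /(leq_trans ac).
Qed.

End IntervalPartition.

Section CoordinateSpaces.

Variables (F : fieldType) (m : nat).
Implicit Types (Q : pred 'I_m) (v : 'rV[F]_m).

Definition coord_space Q : {vspace 'rV[F]_m} :=
  span [seq delta_mx 0 i | i <- filter Q (enum 'I_m)].

Lemma coord_spaceP Q v :
  reflect (forall j, ~~ Q j -> v 0 j = 0) (v \in coord_space Q).
Proof.
pose P := diag_mx (\row_j (~~ Q j)%:R : 'rV[F]_m).
have PE v' j : (v' *m P) 0 j = v' 0 j * (~~ Q j)%:R by rewrite mul_mx_diag !mxE.
apply: (iffP idP) => [vQ | v0].
  have : (coord_space Q <= lker (linfun (mulmxr P)))%VS.
    apply/span_subvP => x /mapP[i]; rewrite mem_filter => /andP[Qi _] ->.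
    rewrite memv_ker lfunE /=; apply/eqP/rowP => j; rewrite PE !mxE.
    by rewrite eqxx /=; case: eqP => [-> | _]; rewrite ?Qi ?mulr0 ?mul0r.
  move=> /subvP/(_ v vQ); rewrite memv_ker lfunE /= => /eqP/rowP vP j Qj.
  by have := vP j; rewrite PE mxE Qj mulr1.
rewrite (row_sum_delta v); apply: memv_suml => j _.
have [Qj | /v0 ->] := boolP (Q j); last by rewrite scale0r mem0v.
by apply/memvZ/memv_span/map_f; rewrite mem_filter Qj mem_enum.
Qed.

Lemma mem_coord_space Q i : (delta_mx 0 i \in coord_space Q) = Q i.
Proof.
apply/idP/idP => [/coord_spaceP vQ | Qi].
  by apply: contraT => /vQ/eqP; rewrite mxE !eqxx oner_eq0.
by apply/memv_span/map_f; rewrite mem_filter Qi mem_enum.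
Qed.

Lemma coord_spaceS Q Q' :
  (forall i, Q i -> Q' i) -> (coord_space Q <= coord_space Q')%VS.
Proof.
move=> QQ'; apply/subvP => v /coord_spaceP vQ; apply/coord_spaceP => j Q'j.
by apply: vQ; apply: contra Q'j; apply: QQ'.
Qed.

Lemma eq_coord_space Q Q' : Q =1 Q' -> coord_space Q = coord_space Q'.
Proof. by move=> eqQ; rewrite /coord_space (eq_filter eqQ). Qed.

Lemma coord_space_pred0 Q : (forall i, ~~ Q i) -> coord_space Q = 0%VS.
Proof.
move=> Q0; rewrite (@eq_coord_space _ pred0) => [|i]; last exact/negbTE.
by rewrite /coord_space filter_pred0 span_nil.
Qed.

Lemma coord_space_predT : coord_space predT = fullv.
Proof. by apply/eqP; rewrite eqEsubv subvf; apply/subvP => v _; apply/coord_spaceP. Qed.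

Lemma coord_spaceU Q Q' :
  coord_space (predU Q Q') = (coord_space Q + coord_space Q')%VS.
Proof.
apply/eqP; rewrite eqEsubv subv_add !coord_spaceS /= => [| i /= -> | i /= ->];
  rewrite ?orbT ?andbT //.
apply/span_subvP => x /mapP[i]; rewrite mem_filter => /andP[/orP[Qi | Q'i] _] ->.
  by apply: (subvP (addvSl _ _)); rewrite mem_coord_space.
by apply: (subvP (addvSr _ _)); rewrite mem_coord_space.
Qed.

Lemma coord_spaceI Q Q' :
  (coord_space Q :&: coord_space Q')%VS = coord_space (predI Q Q').
Proof.
apply/vspaceP => v; rewrite memv_cap; apply/andP/coord_spaceP.
  by case=> /coord_spaceP vQ /coord_spaceP vQ' j; rewrite negb_and => /orP[/vQ | /vQ'].
by move=> vQQ'; split; apply/coord_spaceP => j nQ; apply: vQQ'; rewrite negb_and nQ ?orbT.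
Qed.

Lemma dim_coord_space Q : (\dim (coord_space Q) <= #|Q|)%N.
Proof.
apply: leq_trans (dim_span _) _; rewrite size_map cardE; apply/eq_leq/perm_size.
apply: uniq_perm; [exact/filter_uniq/enum_uniq | exact: enum_uniq | ].
by move=> i; rewrite mem_filter !mem_enum andbT.
Qed.

Lemma sum_coord_space (I : eqType) (s : seq I) (Q : I -> pred 'I_m) :
  (\sum_(i <- s) coord_space (Q i))%VS = coord_space (fun j => has (Q^~ j) s).
Proof.
elim: s => [|i s IHs]; first by rewrite big_nil coord_space_pred0.
by rewrite big_cons IHs -coord_spaceU.
Qed.

Lemma directv_sum_coord_space (I : eqType) (s : seq I) (Q : I -> pred 'I_m) :
  uniq s -> (forall i i' j, Q i j -> Q i' j -> i = i') ->
  directv (\sum_(i <- s) coord_space (Q i)).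
Proof.
move=> + disjQ; elim: s => [_ | i s IHs /andP[si us]]; rewrite directvE /=.
  by rewrite !big_nil dimv0.
rewrite !big_cons dimv_disjoint_sum ?eqn_add2l -?directvE ?IHs //.
rewrite sum_coord_space coord_spaceI coord_space_pred0 // => j.
apply/negP => /andP[Qij /hasP[i' i's Qi'j]].
by move: si; rewrite (disjQ _ _ _ Qij Qi'j) i's.
Qed.

End CoordinateSpaces.

Section MatrixBoundary.

Variables (F : fieldType) (m : nat) (D : 'M[F]_m).

Definition mx_boundary : 'End('rV[F]_m) := linfun (mulmxr D^T).

Lemma mx_boundary_delta j :
  mx_boundary (delta_mx 0 j) = \sum_(i < m) D i j *: delta_mx 0 i.
Proof.
rewrite lfunE /= {1}(row_sum_delta (delta_mx 0 j *m D^T)).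
by apply: eq_bigr => i _; rewrite -rowE !mxE.
Qed.

Lemma mx_boundary_sqr : D *m D = 0 -> (mx_boundary \o mx_boundary = 0)%VF.
Proof.
move=> D2; apply/lfunP => v; rewrite comp_lfunE zero_lfunE !lfunE /=.
by rewrite -mulmxA -trmx_mul D2 trmx0 mulmx0.
Qed.

Lemma limg_mx_boundary (Q Q' : pred 'I_m) :
  (forall i j, D i j != 0 -> Q j -> Q' i) ->
  (mx_boundary @: coord_space F Q <= coord_space F Q')%VS.
Proof.
move=> DQ; rewrite limg_span; apply/span_subvP => x /mapP[y /mapP[j]].
rewrite mem_filter => /andP[Qj _] -> ->; rewrite mx_boundary_delta.
apply: memv_suml => i _; have [-> | Dij] := eqVneq (D i j) 0.
  by rewrite scale0r mem0v.
by rewrite memvZ // mem_coord_space (DQ _ _ Dij).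
Qed.

End MatrixBoundary.

Lemma int_fun_bounded (T : finType) (f : T -> int) :
  exists B : nat, forall x, (absz (f x) <= B)%N.
Proof. by exists (\max_x absz (f x)) => x; apply: leq_bigmax. Qed.

Section GradedFiltration.

Variables (F : fieldType) (m : nat) (D : 'M[F]_m) (deg lvl : 'I_m -> int).
Hypothesis D2 : D *m D = 0.
Hypothesis deg_D : forall i j, D i j != 0 -> deg j = deg i + 1.
Hypothesis lvl_D : forall i j, D i j != 0 -> lvl i <= lvl j.

Definition graded_space (P : pred 'I_m) (n : int) : {vspace 'rV[F]_m} :=
  coord_space F (fun i => (deg i == n) && P i).

Lemma graded_subcomplex (P : pred 'I_m) :
  (forall i j, D i j != 0 -> P j -> P i) ->
  is_subcomplex (mx_boundary D) (graded_space P).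
Proof.
move=> DP; split=> [n | ].
  apply: limg_mx_boundary => i j Dij /andP[/eqP <- Pj].
  by rewrite (DP _ _ Dij Pj) (deg_D Dij) addrK eqxx.
have [B degB] := int_fun_bounded deg.
exists B.+2 => n Bn; rewrite /graded_space !coord_space_pred0 => [|i|i].
- by split; [apply: limg0 | apply: capv0].
- by apply/negP => /andP[/eqP degi _]; have := degB i; lia.
- by apply/negP => /andP[/eqP degi _]; have := degB i; lia.
Qed.

Lemma graded_colim_complex : is_colim_complex (graded_space predT) (mx_boundary D).
Proof.
split; first exact: graded_subcomplex.
split; first exact: mx_boundary_sqr.
have deg_in_s i : deg i \in undup (map deg (enum 'I_m)).
  by rewrite mem_undup map_f ?mem_enum.
exists (undup (map deg (enum 'I_m))); split; first exact: undup_uniq.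
split=> [n ns | ].
  by apply: coord_space_pred0 => i; apply: contra ns => /andP[/eqP <- _].
split.
  apply: directv_sum_coord_space; first exact: undup_uniq.
  by move=> n n' i /andP[/eqP <- _] /andP[/eqP <- _].
rewrite sum_coord_space -coord_space_predT; apply: eq_coord_space => i /=.
by apply/hasP; exists (deg i); rewrite ?eqxx.
Qed.

Lemma graded_filtered_complex :
  filtered_complex (graded_space predT) (fun p => graded_space (fun i => lvl i <= p))
    (mx_boundary D).
Proof.
have [B lvlB] := int_fun_bounded lvl.
split; first exact: graded_colim_complex.
split=> [p n | p | p n | | ].
- by apply: coord_spaceS => i /andP[-> _].
- by apply: graded_subcomplex => i j /lvl_D; apply: le_trans.
- by apply: coord_spaceS => i /andP[-> lvli]; lia.
- exists (- B%:Z - 1) => p n pB; apply: coord_space_pred0 => i.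
  by apply/negP => /andP[_ lvli]; have := lvlB i; lia.
- exists B%:Z => p n Bp; apply: eq_coord_space => i /=.
  by have -> : lvl i <= p by have := lvlB i; lia.
Qed.

Lemma dim_graded_space_succ_level : injective lvl -> forall (p n : int),
  (\dim (graded_space (fun i => (lvl i <= p + 1)%R) n)
     <= (\dim (graded_space (fun i => (lvl i <= p)%R) n)).+1)%N.
Proof.
move=> lvl_inj p n.
pose top := coord_space F (fun i => lvl i == p + 1).
have sub : (graded_space (fun i => (lvl i <= p + 1)%R) n
             <= graded_space (fun i => (lvl i <= p)%R) n + top)%VS.
  rewrite -coord_spaceU; apply: coord_spaceS => i /andP[degi lvli] /=.
  by rewrite degi /=; lia.
apply: leq_trans (dimvS sub) _; apply: leq_trans (dimv_add_leqif _ _).1 _.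
rewrite -[(\dim _).+1]addn1 leq_add2l; apply: leq_trans (dim_coord_space _ _) _.
apply/card_le1_eqP => i j; rewrite !unfold_in => /eqP lvli /eqP lvlj.
by apply: lvl_inj; rewrite lvli.
Qed.

Lemma graded_nondegenerate : injective lvl ->
  nondegenerate_filtered (fun p => graded_space (fun i => lvl i <= p)).
Proof. by move=> lvl_inj p n; rewrite PoszD dim_graded_space_succ_level. Qed.

Lemma graded_adapted_basis :
  (forall i j : 'I_m, (i <= j)%N -> deg i <= deg j) ->
  (forall i j : 'I_m, (i <= j)%N -> deg i = deg j -> lvl i <= lvl j) ->
  adapted_basis (graded_space predT) (fun p => graded_space (fun i => lvl i <= p))
    (fun i => delta_mx 0 i) deg lvl.
Proof.
move=> deg_mono lvl_mono; split.
  rewrite basisEdim size_map size_enum_ord dimvf dim_matrix mul1r leqnn andbT.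
  by rewrite -coord_space_predT /coord_space filter_predT.
split=> // [i | i].
  by rewrite mem_coord_space eqxx.
split=> [| q]; first by rewrite mem_coord_space eqxx /=.
by rewrite mem_coord_space => /andP[].
Qed.

End GradedFiltration.

Theorem lemma4p8 (F : fieldType) (m k : nat) (c : nat -> nat) (D : 'M[F]_m) :
  interval_partition m k c -> differential_mx D -> block_superdiag k c D ->
  exists (vT : vectType F) (V : int -> {vspace vT})
         (FV : int -> int -> {vspace vT}) (d : 'End(vT))
         (b : 'I_m -> vT) (deg lvl : 'I_m -> int),
    [/\ filtered_complex V FV d,
        nondegenerate_filtered FV,
        adapted_basis V FV b deg lvl,
        (forall (j : nat) (a : 'I_m), (1 <= j <= k)%N -> in_block c j a ->
           deg a = j%:Z) &
        (forall j : 'I_m, d (b j) = \sum_(i < m) D i j *: b i)].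
Proof.
move=> partition_c D2 superdiag_D.
pose deg (a : 'I_m) := (block_index k c a)%:Z.
pose lvl (a : 'I_m) := (a : nat)%:Z.
have deg_D i j : D i j != 0 -> deg j = deg i + 1.
  by move/(block_superdiag_succ partition_c superdiag_D); rewrite /deg => ->; lia.
have lvl_D i j : D i j != 0 -> lvl i <= lvl j.
  by move/(block_superdiag_lt partition_c superdiag_D); rewrite /lvl; lia.
exists _, (graded_space F deg predT), (fun p => graded_space F deg (fun i => lvl i <= p)),
  (mx_boundary D), (fun i => delta_mx 0 i), deg, lvl.
split.
- exact: graded_filtered_complex.
- by apply: graded_nondegenerate => i j [] /val_inj.
- apply: graded_adapted_basis => i j ij; last by rewrite lez_nat.
  by rewrite lez_nat (block_index_mono partition_c).
- by move=> j a ja /(block_indexE partition_c ja); rewrite /deg => ->.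
- exact: mx_boundary_delta.
Qed.
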